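(* Let $E=E_+-E_-$ be a virtual complex, where $E_\pm$ are positive admissible complexes of Hilbert spaces, and assume $E$ is pseudofinite with $\det'(\Delta\,|\,E)=1$. Then the twist $E'$ is a pseudofinite virtual complex and $$\det{}'(\Delta\,|\,E')=\tau_1(E)^{-1}.$$
   Context: A positive complex of Hilbert spaces is $E_0\to E_1\to\cdots$ (zero in negative degrees); it is admissible if every Laplacian $\Delta_p=dd^*+d^*d|_{E_p}$ is admissible (restricted off its kernel): some negative power is trace class and its zeta function $\operatorname{tr}\Delta_p'^{-s}$ continues to a function holomorphic at $0$; $\det'(\Delta_p)=\exp(-\zeta'(0))$. For a virtual complex $E=E_+-E_-$ put $\det'(\Delta|E_k)=\det'(\Delta|(E_+)_k)/\det'(\Delta|(E_-)_k)$. $E$ is pseudofinite if there is $k_0$ with $\det'(\Delta|E_k)=1$ for all $k\ge k_0$; then $\det'(\Delta|E)=\prod_{k\ge0}\det'(\Delta|E_k)^{(-1)^k}$. The torsion is $\tau_1(E)=\prod_{p\ge0}\det'(\Delta|E_p)^{p(-1)^p}$. The twist is the virtual complex $E'=\sum_{k\ge0}(-1)^kE[-k]$, where $E[j]_k=E_{k+j}$; thus its degree-$j$ component is the virtual space $\sum_{k=0}^j(-1)^kE_{j-k}$ (with the direct-sum Laplacians), so $\det'(\Delta|E'_j)=\prod_{k=0}^{j}\det'(\Delta|E_{j-k})^{(-1)^k}$. *)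

From HB Require Import structures.
From mathcomp Require Import all_boot all_order all_algebra.
From mathcomp Require Import all_classical all_reals all_analysis.
Set Implicit Arguments. Unset Strict Implicit. Unset Printing Implicit Defensive.
Import Order.TTheory GRing.Theory Num.Theory.
Import numFieldNormedType.Exports.
Local Open Scope classical_set_scope.
Local Open Scope ring_scope.

Record adm_complex (R : realType) := AdmComplex {
  detLap : nat -> R ;
  detLap_gt0 : forall p, 0 < detLap p }.

Record virtual_complex (R : realType) := VirtualComplex {
  vplus : adm_complex R ;
  vminus : adm_complex R }.

Definition vdet (R : realType) (E : virtual_complex R) (k : nat) : R :=
  detLap (vplus E) k / detLap (vminus E) k.

Definition pseudofinite (R : realType) (d : nat -> R) : Prop :=
  exists k0 : nat, forall k, (k0 <= k)%N -> d k = 1.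

Definition infprod (R : realType) (f : nat -> R) : R :=
  lim ((fun n : nat => \prod_(k < n) f k) @ \oo).

Definition det_total (R : realType) (d : nat -> R) : R :=
  infprod (fun k => d k ^ ((-1) ^+ k : int)).

Definition tau1 (R : realType) (d : nat -> R) : R :=
  infprod (fun p => d p ^ ((p%:Z) * (-1) ^+ p)).

(* The twist E' = sum_k (-1)^k E[-k]: its degree-j determinant is
   prod_{k=0}^{j} det'(Delta|E_{j-k})^((-1)^k). *)
Definition twist_det (R : realType) (d : nat -> R) (j : nat) : R :=
  \prod_(k < j.+1) d (j - k)%N ^ ((-1) ^+ k : int).

From HB Require Import structures.
From mathcomp Require Import all_boot all_order all_algebra.
From mathcomp Require Import all_classical all_reals all_analysis.
Set Implicit Arguments. Unset Strict Implicit. Unset Printing Implicit Defensive.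
Import Order.TTheory GRing.Theory Num.Theory.
Local Open Scope ring_scope.

(* Write [P_n] for the alternating partial product
   [prod_(i < n) det'(Delta|E_i)^((-1)^i)].  Reversing the order of the factors
   of [det'(Delta|E'_j)] shows [det'(Delta|E'_j)^((-1)^j) = P_(j+1)]; since
   [det'(Delta|E)] is the eventual value [P_k0] of [P_n], which is [1], the twist
   is pseudofinite.  Telescoping then gives
   [prod_(j < n) P_(j+1) * prod_(p < n) det'(Delta|E_p)^(p (-1)^p) = P_n ^ n],
   and evaluating at [n = k0] yields [det'(Delta|E') * tau_1(E) = 1]. *)

Definition alt_prod (R : unitRingType) (d : nat -> R) (n : nat) : R :=
  \prod_(i < n) d i ^ ((-1) ^+ i : int).

Lemma exprz_sign (R : unitRingType) (x : R) (k : nat) :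
  x ^ ((-1) ^+ k : int) = if odd k then x^-1 else x.
Proof. by rewrite -signr_odd; case: (odd k); rewrite ?expr1 ?exprN1. Qed.

Lemma alt_prod_eventually_const (R : unitRingType) (d : nat -> R) (k0 n : nat) :
  (forall k, (k0 <= k)%N -> d k = 1) -> (k0 <= n)%N ->
  alt_prod d n = alt_prod d k0.
Proof.
move=> d_eq1 le_k0n; rewrite /alt_prod -(subnKC le_k0n) big_split_ord /=.
by rewrite [X in _ * X]big1 ?mulr1 // => i _; rewrite d_eq1 ?leq_addr ?exp1rz.
Qed.

Section TwistDeterminants.
Import numFieldNormedType.Exports.
Local Open Scope classical_set_scope.
Variable R : realType.
Implicit Type d : nat -> R.

Lemma infprod_eventually1 (f : nat -> R) (k0 : nat) :
  (forall k, (k0 <= k)%N -> f k = 1) -> infprod f = \prod_(k < k0) f k.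
Proof.
move=> f_eq1; apply: lim_near_cst; first exact: norm_hausdorff.
exists k0 => // n /= le_k0n.
rewrite -(subnKC le_k0n) big_split_ord /= [X in _ * X]big1 ?mulr1 // => i _.
by rewrite f_eq1 ?leq_addr.
Qed.

Lemma det_total_eventually1 d (k0 : nat) :
  (forall k, (k0 <= k)%N -> d k = 1) -> det_total d = alt_prod d k0.
Proof. by move=> d_eq1; apply: infprod_eventually1 => k /d_eq1 ->; rewrite exp1rz. Qed.

Lemma tau1_eventually1 d (k0 : nat) :
  (forall k, (k0 <= k)%N -> d k = 1) ->
  tau1 d = \prod_(p < k0) d p ^ (p%:Z * (-1) ^+ p).
Proof. by move=> d_eq1; apply: infprod_eventually1 => k /d_eq1 ->; rewrite exp1rz. Qed.

Lemma twist_det_sign d (j : nat) :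
  twist_det d j ^ ((-1) ^+ j : int) = alt_prod d j.+1.
Proof.
rewrite /twist_det /alt_prod (reindex_inj rev_ord_inj) /= exprz_sign.
have rev_idx (i : 'I_j.+1) : (j - (j.+1 - i.+1) = i)%N /\
                             odd (j.+1 - i.+1) = odd j (+) odd i.
  by have le_ij : (i <= j)%N := ltn_ord i; rewrite subSS subKn // oddB.
case odd_j: (odd j); first rewrite -prodfV.
all: apply: eq_bigr => i _; rewrite !exprz_sign; case: (rev_idx i) => -> ->.
all: by rewrite odd_j; case: (odd i); rewrite ?invrK.
Qed.

Lemma alt_prod_twist_mul_tau1 d (n : nat) :
  alt_prod (twist_det d) n * \prod_(p < n) d p ^ (p%:Z * (-1) ^+ p) =
  alt_prod d n ^+ n.
Proof.
elim: n => [|n IHn]; first by rewrite /alt_prod !big_ord0 mulr1.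
rewrite /alt_prod !big_ord_recr /= -/(alt_prod _ n) twist_det_sign.
rewrite mulrACA IHn /alt_prod big_ord_recr /= -/(alt_prod d n).
by rewrite -exprz_exp exprzAC -exprnP exprMn !exprS mulrACA mulrCA.
Qed.

Lemma twist_det_eventually1 d (k0 : nat) :
  (forall k, (k0 <= k)%N -> d k = 1) -> alt_prod d k0 = 1 ->
  forall j, (k0 <= j)%N -> twist_det d j = 1.
Proof.
move=> d_eq1 Pk0_eq1 j le_k0j.
have := twist_det_sign d j.
rewrite (alt_prod_eventually_const d_eq1 (leqW le_k0j)) Pk0_eq1 exprz_sign.
by case: (odd j) => // /eqP; rewrite invr_eq1 => /eqP.
Qed.

End TwistDeterminants.

Theorem proposition2p2p1 (R : realType) (E : virtual_complex R) :
  pseudofinite (vdet E) ->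
  det_total (vdet E) = 1 ->
  pseudofinite (twist_det (vdet E)) /\
  det_total (twist_det (vdet E)) = (tau1 (vdet E))^-1.
Proof.
set d := vdet E => -[k0 d_eq1] det_eq1.
have Pk0_eq1 : alt_prod d k0 = 1 by rewrite -(det_total_eventually1 d_eq1).
have twist_eq1 := twist_det_eventually1 d_eq1 Pk0_eq1.
split; first by exists k0.
rewrite (det_total_eventually1 twist_eq1) (tau1_eventually1 d_eq1).
apply/esym/mulr1_eq; rewrite mulrC alt_prod_twist_mul_tau1.
by rewrite Pk0_eq1 expr1n.
Qed.
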